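(* Let $\Lambda$ be a strongly connected finite $k$-graph and let $M$ be the Borel probability measure on $\Lambda^\infty$ with $M(Z(\lambda))=\rho(\Lambda)^{-d(\lambda)}x^\Lambda_{s(\lambda)}$ for all $\lambda\in\Lambda$. For $m,n\in\mathbb{N}^k$, \[M(\{x\in\Lambda^\infty:\sigma^m(x)=\sigma^n(x)\})=\begin{cases}1&\text{if }m-n\in\operatorname{Per}\Lambda,\\0&\text{otherwise.}\end{cases}\]
   Context: A $k$-graph is a countable category $\Lambda$ with a functor $d:\Lambda\to\mathbb{N}^k$ such that whenever $d(\lambda)=m+n$ there are unique $\mu,\nu$ with $d(\mu)=m$, $d(\nu)=n$, $\lambda=\mu\nu$. $\Lambda^n=d^{-1}(n)$, $\Lambda^0$ = vertices, $r,s$ range and source. Standing convention: $\Lambda^{e_i}\neq\emptyset$ for each $i$. Finite: each $\Lambda^n$ finite; strongly connected: $v\Lambda w\neq\emptyset$ for all vertices. Coordinate matrices $A_i(v,w)=|v\Lambda^{e_i}w|$, $\rho(\Lambda)^n=\prod_i\rho(A_i)^{n_i}$ (spectral radii). $x^\Lambda$ is the unique vector in $[0,\infty)^{\Lambda^0}$ with $\sum_vx^\Lambda_v=1$ and $A_ix^\Lambda=\rho(A_i)x^\Lambda$ for all $i$. (A unique such Borel probability measure $M$ exists.) Infinite paths: degree-preserving functors $x:\Omega_k\to\Lambda$, $\Omega_k=\{(m,n)\in\mathbb{N}^k\times\mathbb{N}^k:m\le n\}$ with $r(m,n)=(m,m)$, $s(m,n)=(n,n)$, $(m,n)(n,p)=(m,p)$,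 $d(m,n)=n-m$; $\Lambda^\infty$ their set, with the topology generated by the compact open sets $Z(\lambda)=\{x:x(0,d(\lambda))=\lambda\}$; $\sigma^n(x)(p,q)=x(n+p,n+q)$. $\operatorname{Per}\Lambda=\{m-n:\sigma^m(x)=\sigma^n(x)\ \forall x\in\Lambda^\infty\}$. *)

From HB Require Import structures.
From mathcomp Require Import all_boot all_order all_algebra finmap.
From mathcomp Require Import all_classical all_reals all_analysis.
From mathcomp Require complex.

Set Implicit Arguments.
Unset Strict Implicit.
Unset Printing Implicit Defensive.

Import Order.TTheory GRing.Theory Num.Theory.
Local Open Scope classical_set_scope.

Definition Nk (k : nat) := {ffun 'I_k -> nat}.
Definition zerok (k : nat) : Nk k := [ffun => 0%N].
Definition addk k (m n : Nk k) : Nk k := [ffun i => (m i + n i)%N].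
Definition subk k (m n : Nk k) : Nk k := [ffun i => (m i - n i)%N].
Definition lek k (m n : Nk k) : bool := [forall i, (m i <= n i)%N].
Definition ek k (i : 'I_k) : Nk k := [ffun j => nat_of_bool (j == i)].

(* k-graphs: a countable category (objects = vertices, here a finite  *)
(* type; morphisms = paths) with a degree functor d : Λ -> N^k having *)
(* the unique factorisation property.  Composition is a total function *)
(* only constrained on composable pairs (s a = r b); kcomp a b = a b.  *)
Record kgraph (k : nat) := KGraph {
  kvert : finType;
  kmor : countType;
  kr : kmor -> kvert;
  ks : kmor -> kvert;
  kid : kvert -> kmor;
  kcomp : kmor -> kmor -> kmor;
  kdeg : kmor -> Nk k;
  kr_id : forall v, kr (kid v) = v;
  ks_id : forall v, ks (kid v) = v;
  kr_comp : forall a b, ks a = kr b -> kr (kcomp a b) = kr a;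
  ks_comp : forall a b, ks a = kr b -> ks (kcomp a b) = ks b;
  kcompA : forall a b c, ks a = kr b -> ks b = kr c ->
    kcomp a (kcomp b c) = kcomp (kcomp a b) c;
  kcomp_idl : forall a, kcomp (kid (kr a)) a = a;
  kcomp_idr : forall a, kcomp a (kid (ks a)) = a;
  kdeg_id : forall v, kdeg (kid v) = zerok k;
  kdeg_comp : forall a b, ks a = kr b ->
    kdeg (kcomp a b) = addk (kdeg a) (kdeg b);
  kfactor : forall l (m n : Nk k), kdeg l = addk m n ->
    exists! p : kmor * kmor,
      [/\ kdeg p.1 = m, kdeg p.2 = n, ks p.1 = kr p.2 & l = kcomp p.1 p.2]
}.

Section KGraphDefs.
Variables (k : nat) (G : kgraph k).
Local Notation V := (kvert G).
Local Notation Lam := (kmor G).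

Definition kfinite : Prop :=
  forall n : Nk k, finite_set [set l : Lam | kdeg l = n].

Definition kstrongly_connected : Prop :=
  forall v w : V, exists l : Lam, kr l = v /\ ks l = w.

Definition kno_empty_generators : Prop :=
  forall i : 'I_k, exists l : Lam, kdeg l = ek i.

Definition coord_mx (i : 'I_k) (v w : V) : nat :=
  #|` fset_set [set l : Lam | [/\ kdeg l = ek i, kr l = v & ks l = w]] |.

Import complex.
Local Open Scope ring_scope.

Definition is_eigenvalue (R : realType) (A : V -> V -> nat) (z : R[i]) : Prop :=
  exists u : V -> R[i], (exists v, u v != 0) /\
    forall v, \sum_(w : V) (A v w)%:R * u w = z * u v.

Definition is_spectral_radius (R : realType) (A : V -> V -> nat) (r : R) : Prop :=
  (exists z : R[i], is_eigenvalue A z /\ `|z| = (r%:C)%C) /\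
  (forall z : R[i], is_eigenvalue A z -> `|z| <= (r%:C)%C).

Definition Omega := {p : Nk k * Nk k | lek p.1 p.2}.

(* degree-preserving functors Ω_k -> Λ, given by their action on
   morphisms (objects (m,m) of Ω_k are identified with the identity
   morphisms (m,m)) *)
Definition is_inf_path (f : Omega -> Lam) : Prop :=
  [/\ (forall a : Omega, kdeg (f a) = subk (val a).2 (val a).1),
      (forall a b c : Omega, (val a).2 = (val b).1 ->
          val c = ((val a).1, (val b).2) ->
          ks (f a) = kr (f b) /\ kcomp (f a) (f b) = f c) &
      (forall a : Omega, (val a).1 = (val a).2 -> f a = kid (kr (f a)))].

Definition Linf := {f : Omega -> Lam | is_inf_path f}.

Definition pv (x : Linf) (m n : Nk k) : option Lam :=
  omap (proj1_sig x) (insub (m, n) : option Omega).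

Definition Zcyl (l : Lam) : set Linf :=
  [set x | pv x (zerok k) (kdeg l) = Some l].

(* σ^m(x) = σ^n(x), i.e. x(m+p, m+q) = x(n+p, n+q) for all p <= q *)
Definition shift_eq (m n : Nk k) (x : Linf) : Prop :=
  forall p q : Nk k, lek p q ->
    pv x (addk m p) (addk m q) = pv x (addk n p) (addk n q).

(* m - n ∈ Per Λ (the difference is taken in Z^k) *)
Definition in_Per (m n : Nk k) : Prop :=
  exists p q : Nk k,
    (forall i : 'I_k, (p i)%:Z - (q i)%:Z = (m i)%:Z - (n i)%:Z)%R /\
    (forall x : Linf, shift_eq p q x).

(* open sets of the topology generated by the sets Z(λ): unions of
   finite intersections of cylinder sets *)
Definition cyl_open (U : set Linf) : Prop :=
  forall x, U x -> exists s : seq Lam,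
    (forall l, l \in s -> Zcyl l x) /\
    [set y | forall l, l \in s -> Zcyl l y] `<=` U.

End KGraphDefs.
Arguments coord_mx {k} G i v w.

(* MathComp-Analysis
   measurable types must be pointed, so the carrier is equipped with a
   chosen point x0 (Λ^∞ is nonempty whenever a probability measure on it
   exists). *)
Definition LinfP k (G : kgraph k) (x0 : Linf G) : Type := Linf G.

Section LinfPInst.
Variables (k : nat) (G : kgraph k) (x0 : Linf G).
HB.instance Definition _ := gen_eqMixin (LinfP x0).
HB.instance Definition _ := gen_choiceMixin (LinfP x0).
HB.instance Definition _ := isPointed.Build (LinfP x0) x0.

Definition borel_opens : set (set (LinfP x0)) := [set U | cyl_open U].

Definition LinfBorel : measurableType _ := g_sigma_algebraType borel_opens.
End LinfPInst.

(** If [m - n] is a period, [sigma^m = sigma^n] on all of the path space.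
    Otherwise some [x] has [sigma^m x <> sigma^n x], and this is witnessed by a
    finite initial segment [mu] of [x]: a path containing [mu] at any position [T]
    has [sigma^(T+m) <> sigma^(T+n)], hence [sigma^m <> sigma^n].  By strong
    connectivity each vertex [v] is the range of a path [nu v] ending with [mu],
    and since [x^Lambda] is positive, [M (Z (lambda nu)) >= delta * M (Z lambda)]
    for a uniform [delta > 0].  Decomposing along the cylinders of degree [J L],
    the paths avoiding [nu] at the positions [0, L, ..., (J-1) L] have measure at
    most [(1 - delta)^J], and they contain [{sigma^m = sigma^n}], which is thus
    null.  In the periodic case the measure is used too: [M (Z lambda) > 0], so
    every finite path extends to an infinite one, and a failing segment placed at
    position [p] would contradict [sigma^p = sigma^q]. *)

From Pilot Require Import Defs.
From HB Require Import structures.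
From mathcomp Require Import all_boot all_order all_algebra finmap.
From mathcomp Require Import all_classical all_reals all_analysis.
From mathcomp Require Import zify ring lra.

(* [kernel.v] also defines a [kcomp]. *)
Local Notation kcomp := Defs.kcomp.

Set Implicit Arguments.
Unset Strict Implicit.
Unset Printing Implicit Defensive.

Import Order.TTheory GRing.Theory Num.Theory.
Import numFieldNormedType.Exports.
Local Open Scope classical_set_scope.

Section NkArith.
Variable k : nat.
Implicit Types m n p D : Nk k.

Lemma lekP m n : reflect (forall i, m i <= n i)%N (lek m n).
Proof. exact: forallP. Qed.

Lemma lek_trans n m p : lek m n -> lek n p -> lek m p.
Proof. by move=> /lekP mn /lekP np; apply/lekP => i; apply: leq_trans (mn i) (np i). Qed.

Lemma add0k m : addk (zerok k) m = m.
Proof. by apply/ffunP => i; rewrite !ffunE. Qed.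

Lemma addkC m n : addk m n = addk n m.
Proof. by apply/ffunP => i; rewrite !ffunE addnC. Qed.

Lemma addkA m n p : addk m (addk n p) = addk (addk m n) p.
Proof. by apply/ffunP => i; rewrite !ffunE addnA. Qed.

Lemma addkCA m n p : addk m (addk n p) = addk n (addk m p).
Proof. by rewrite addkA [addk m n]addkC -addkA. Qed.

Definition mulnk (j : nat) (L : Nk k) : Nk k := [ffun i => (j * L i)%N].

Lemma lek_mulnk j J L : (j < J)%N -> lek (addk (mulnk j L) L) (mulnk J L).
Proof. by move=> jJ; apply/lekP => i; rewrite !ffunE addnC -mulSn leq_mul2r jJ orbT. Qed.

Lemma Nk_ub (T : finType) (f : T -> Nk k) : exists L, forall t, lek (f t) L.
Proof.
exists [ffun i => \sum_t f t i]%N => t; apply/lekP => i.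
by rewrite ffunE (bigD1 t) //= leq_addr.
Qed.

Lemma Nk_ind (P : Nk k -> Prop) :
  P (zerok k) -> (forall D i, P D -> P (addk D (ek i))) -> forall D, P D.
Proof.
move=> P0 PS D; move: {2}(\sum_i D i)%N (leqnn (\sum_i D i)%N) => N.
elim: N D => [|N IH] D sumD.
  suff -> : D = zerok k by [].
  move: sumD; rewrite leqn0 sum_nat_eq0 => /forallP D0.
  by apply/ffunP => i; rewrite ffunE; apply/eqP; apply: D0.
have [/forallP D0|] := boolP [forall i, D i == 0%N].
  suff -> : D = zerok k by [].
  by apply/ffunP => i; rewrite ffunE; apply/eqP; apply: D0.
rewrite negb_forall => /existsP [i /negbTE Di].
have -> : D = addk (subk D (ek i)) (ek i).
  apply/ffunP => j; rewrite !ffunE; case: eqVneq => [->|] /=; lia.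
apply/PS/IH; rewrite -ltnS (leq_trans _ sumD) // [X in (_ < X)%N](bigD1 i) //=.
rewrite [X in (X < _)%N](bigD1 i) //= !ffunE eqxx.
under eq_bigr => j /negbTE ji do rewrite !ffunE ji subn0.
move/negbT: Di; rewrite -lt0n; lia.
Qed.
End NkArith.

Ltac nk_lia :=
  let i := fresh "i" in
  first [apply/ffunP => i | apply/lekP => i];
  repeat match goal with
  | H : is_true (lek _ _) |- _ => move/lekP/(_ i): H
  | H : @eq (Nk _) _ _ |- _ => move/(congr1 (fun f : Nk _ => f i)): H
  end;
  rewrite /addk /subk /zerok /ek /mulnk ?ffunE /=; lia.

Section KGraph.
Variables (k : nat) (G : kgraph k).
Local Notation Lam := (kmor G).

Lemma kfactor_uniq (a b a' b' : Lam) :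
  ks a = kr b -> ks a' = kr b' -> kdeg a = kdeg a' -> kdeg b = kdeg b' ->
  kcomp a b = kcomp a' b' -> a = a' /\ b = b'.
Proof.
move=> ab ab' da db e.
have [[p1 p2] [_ uniq]] := kfactor (kdeg_comp ab).
have := uniq (a, b) (And4 erefl erefl ab erefl).
have := uniq (a', b') (And4 (esym da) (esym db) ab' e).
by move=> -> [-> ->].
Qed.

Lemma kdeg_eq0 (l : Lam) : kdeg l = zerok k -> l = kid (kr l).
Proof.
move=> dl; have dl' : kdeg l = addk (zerok k) (zerok k) by rewrite add0k.
have [[p1 p2] [_ uniq]] := kfactor dl'.
have := uniq (kid (kr l), l) (And4 (kdeg_id _) dl (ks_id _) (esym (kcomp_idl l))).
have := uniq (l, kid (ks l)) (And4 dl (kdeg_id _) (esym (kr_id _)) (esym (kcomp_idr l))).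
by move=> -> [].
Qed.

Lemma kmor_ind (P : Lam -> Prop) :
  (forall v, P (kid v)) ->
  (forall l f i, kdeg f = ek i -> ks l = kr f -> P l -> P (kcomp l f)) ->
  forall l, P l.
Proof.
move=> Pid Pcomp l; suff : forall D l, kdeg l = D -> P l by apply.
elim/Nk_ind => [{}l /kdeg_eq0 ->|D i IH {}l dl]; first exact: Pid.
have [[l1 f] [[/= d1 df h ->] _]] := kfactor dl.
exact: Pcomp df h (IH _ d1).
Qed.

End KGraph.

Local Open Scope ring_scope.

Section Eigenvector.
Variables (k : nat) (G : kgraph k) (R : realType).
Variables (rho : 'I_k -> R) (xL : kvert G -> R).
Hypothesis Hfin : kfinite G.
Hypothesis xL_ge0 : forall v, 0 <= xL v.
Hypothesis xL_eigen : forall i v,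
  \sum_w (coord_mx G i v w)%:R * xL w = rho i * xL v.

Lemma coord_mx_gt0 (f : kmor G) i :
  kdeg f = ek i -> (0 < coord_mx G i (kr f) (ks f))%N.
Proof.
move=> df; rewrite /coord_mx cardfs_gt0; apply/fset0Pn; exists f.
rewrite in_fset_set ?inE //.
by apply: sub_finite_set (Hfin (ek i)) => l [].
Qed.

Lemma eigen_edge_le (f : kmor G) i : kdeg f = ek i -> xL (ks f) <= rho i * xL (kr f).
Proof.
move=> df; rewrite -xL_eigen (bigD1 (ks f)) //=.
have rest_ge0 : 0 <= \sum_(w | w != ks f) (coord_mx G i (kr f) w)%:R * xL w.
  by apply: sumr_ge0 => w _; rewrite mulr_ge0.
have : xL (ks f) <= (coord_mx G i (kr f) (ks f))%:R * xL (ks f).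
  by rewrite ler_peMl // ler1n coord_mx_gt0.
lra.
Qed.

Lemma eigen_path_gt0 (l : kmor G) : 0 < xL (ks l) -> 0 < xL (kr l).
Proof.
elim/kmor_ind: l => [v|l f i df lf IH]; first by rewrite ks_id kr_id.
rewrite ks_comp // kr_comp // => xf_gt0; apply: IH; rewrite lf.
have rx_gt0 := lt_le_trans xf_gt0 (eigen_edge_le df).
rewrite lt_def xL_ge0 andbT; apply: contraTneq rx_gt0 => ->.
by rewrite mulr0 ltxx.
Qed.

Hypothesis Hsc : kstrongly_connected G.
Hypothesis xL_sum1 : \sum_v xL v = 1.

Lemma eigen_gt0 v : 0 < xL v.
Proof.
have [u xu_gt0] : exists u, 0 < xL u.
  apply/not_existsP => xL_le0; move: xL_sum1; rewrite big1 => [/eqP|u _].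
    by rewrite eq_sym oner_eq0.
  by apply/eqP; rewrite eq_le xL_ge0 andbT leNgt; apply/negP => /xL_le0.
have [l [<- lu]] := Hsc v u.
by apply: eigen_path_gt0; rewrite lu.
Qed.

Hypothesis Hgen : kno_empty_generators G.

Lemma rho_gt0 i : 0 < rho i.
Proof.
have [f df] := Hgen i.
have := lt_le_trans (eigen_gt0 (ks f)) (eigen_edge_le df).
by rewrite pmulr_lgt0 // eigen_gt0.
Qed.

End Eigenvector.

Section PathsIntoVertex.
Variables (k : nat) (G : kgraph k).
Hypotheses (Hsc : kstrongly_connected G) (Hgen : kno_empty_generators G).

Lemma exists_path_deg_ge (w : kvert G) (D : Nk k) :
  exists c : kmor G, ks c = w /\ lek D (kdeg c).
Proof.
elim/Nk_ind: D => [|D i [c [cw Dc]]].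
  by exists (kid w); split; [rewrite ks_id | apply/lekP => i; rewrite ffunE].
have [f df] := Hgen i; have [b [bf bc]] := Hsc (ks f) (kr c).
have fbc : ks f = kr (kcomp b c) by rewrite kr_comp.
exists (kcomp f (kcomp b c)); split; first by rewrite !ks_comp.
by rewrite kdeg_comp // kdeg_comp // df; nk_lia.
Qed.

Lemma exists_path_deg (w : kvert G) (D : Nk k) :
  exists a : kmor G, kdeg a = D /\ ks a = w.
Proof.
have [c [cw Dc]] := exists_path_deg_ge w D.
have dc : kdeg c = addk (subk (kdeg c) D) D by nk_lia.
have [[c1 a] [[/= _ da ca ec] _]] := kfactor dc.
by exists a; rewrite -cw ec ks_comp.
Qed.

End PathsIntoVertex.

Section InfinitePaths.
Variables (k : nat) (G : kgraph k).
Implicit Types (x y : Linf G) (a b c s t m n p q D T : Nk k) (l mu : kmor G).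

Lemma pvE x a b (ab : lek a b) : pv x a b = Some (proj1_sig x (exist _ (a, b) ab)).
Proof. by rewrite /pv insubT /=; do 2 f_equal; apply: val_inj. Qed.

Lemma pv_defined x a b : lek a b -> exists l, pv x a b = Some l.
Proof. by move=> ab; rewrite (pvE x ab); eexists. Qed.

Lemma pv_deg x a b l : pv x a b = Some l -> kdeg l = subk b a.
Proof.
rewrite /pv; case: insubP => //= -[[a' b'] ab] _ /= [<- <-] [<-].
by case: (proj2_sig x) => deg_x _ _; rewrite deg_x.
Qed.

Lemma pv_comp x a b c : lek a b -> lek b c ->
  exists l1 l2, [/\ pv x a b = Some l1, pv x b c = Some l2,
    ks l1 = kr l2 & pv x a c = Some (kcomp l1 l2)].
Proof.
move=> ab bc; have ac := lek_trans ab bc.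
rewrite (pvE x ab) (pvE x bc) (pvE x ac).
case: (proj2_sig x) => _ functor_x _.
have [l12 e] := functor_x (exist _ (a, b) ab) (exist _ (b, c) bc)
  (exist _ (a, c) ac) erefl erefl.
by do 2 eexists; split; eauto; rewrite e.
Qed.

Lemma pv_comp_inv x a b c l1 l2 : lek a b -> lek b c -> ks l1 = kr l2 ->
  kdeg l1 = subk b a -> pv x a c = Some (kcomp l1 l2) ->
  pv x a b = Some l1 /\ pv x b c = Some l2.
Proof.
move=> ab bc l12 dl1 e.
have [m1 [m2 [e1 e2 m12 e3]]] := pv_comp x ab bc.
have dm1 := pv_deg e1; have dm2 := pv_deg e2.
have d12 := pv_deg e; rewrite kdeg_comp // in d12.
have [<- <-] // : m1 = l1 /\ m2 = l2.
apply: kfactor_uniq m12 l12 _ _ _.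
- by rewrite dm1.
- by rewrite dm2; nk_lia.
- by move: e; rewrite e3 => -[].
Qed.

Lemma pv_seg x y a b c a' b' c' :
  lek a b -> lek b c -> lek a' b' -> lek b' c' -> subk b a = subk b' a' ->
  pv x a c = pv y a' c' -> pv x a b = pv y a' b' /\ pv x b c = pv y b' c'.
Proof.
move=> ab bc ab' bc' dab e.
have [l1 [l2 [e1 e2 l12 e3]]] := pv_comp x ab bc.
have [] := pv_comp_inv ab' bc' l12 _ (etrans (esym e) e3).
  by rewrite (pv_deg e1).
by rewrite e1 e2 => -> ->.
Qed.

Lemma pv_subsegment x y s t D a b : lek a b -> lek b D ->
  pv x s (addk s D) = pv y t (addk t D) ->
  pv x (addk s a) (addk s b) = pv y (addk t a) (addk t b).
Proof.
move=> ab bD e.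
have [e' _] : pv x s (addk s b) = pv y t (addk t b) /\
    pv x (addk s b) (addk s D) = pv y (addk t b) (addk t D).
  by apply: pv_seg e; nk_lia.
have [_ e''] : pv x s (addk s a) = pv y t (addk t a) /\
    pv x (addk s a) (addk s b) = pv y (addk t a) (addk t b).
  by apply: pv_seg e'; nk_lia.
exact: e''.
Qed.

Definition occurs_at T l y := pv y T (addk T (kdeg l)) = Some l.

Lemma Zcyl_occursE l : Zcyl l = occurs_at (zerok k) l.
Proof. by rewrite /occurs_at add0k. Qed.

Lemma occurs_at_comp T l mu y : ks l = kr mu ->
  occurs_at T (kcomp l mu) y -> occurs_at T l y /\ occurs_at (addk T (kdeg l)) mu y.
Proof.
rewrite /occurs_at => lmu; rewrite kdeg_comp // addkA.
by apply: pv_comp_inv => //; nk_lia.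
Qed.

Definition prefix_determined D (A : set (Linf G)) :=
  forall y y', pv y (zerok k) D = pv y' (zerok k) D -> A y -> A y'.

Lemma occurs_at_prefix_determined D T l : lek (addk T (kdeg l)) D ->
  prefix_determined D (occurs_at T l).
Proof.
move=> lD y y' e; have Tl : lek T (addk T (kdeg l)) by nk_lia.
have := pv_subsegment (x := y) (y := y') (s := zerok k) (t := zerok k) Tl lD.
by rewrite /occurs_at !add0k => /(_ e) ->.
Qed.

Lemma Zcyl_prefix_determined l : prefix_determined (kdeg l) (Zcyl l).
Proof. by move=> y y' e; rewrite /Zcyl /= e. Qed.

Lemma prefix_determined_open D A : prefix_determined D A -> cyl_open A.
Proof.
move=> detA y Ay; have [l e] := pv_defined y (a := zerok k) (b := D) ltac:(nk_lia).
have dl : kdeg l = D by rewrite (pv_deg e); nk_lia.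
exists [:: l]; split => [l'|y' /(_ l (mem_head _ _))].
  by rewrite inE => /eqP ->; rewrite /Zcyl /= dl.
by rewrite /Zcyl /= dl -e => /esym e'; apply: detA e' Ay.
Qed.

Lemma prefix_determined_Zcyl D A l : prefix_determined D A -> kdeg l = D ->
  A `&` Zcyl l = set0 \/ Zcyl l `<=` A.
Proof.
move=> detA dl; have [[y [Ay Zy]]|] := pselect (exists y, A y /\ Zcyl l y).
  right => y' Zy'; apply: detA Ay; rewrite -dl.
  by move: Zy Zy'; rewrite /Zcyl /= => -> ->.
by move=> noy; left; apply/seteqP; split => // y [Ay Zy]; apply: noy; exists y.
Qed.

Definition avoids (nu : kvert G -> kmor G) L (J : nat) : set (Linf G) :=
  [set y | forall j, (j < J)%N -> forall v, ~ occurs_at (mulnk j L) (nu v) y].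

Lemma avoids_prefix_determined nu L J : (forall v, lek (kdeg (nu v)) L) ->
  prefix_determined (mulnk J L) (avoids nu L J).
Proof.
move=> nu_L y y' e avy j jJ v occ; apply: (avy j jJ v).
apply: occurs_at_prefix_determined (esym e) occ.
by have jJL := lek_mulnk L jJ; have nuL := nu_L v; nk_lia.
Qed.

Lemma shift_eq_addl T m n y : shift_eq m n y -> shift_eq (addk T m) (addk T n) y.
Proof.
move=> sh p q pq; rewrite -!addkA !(addkCA T); apply: sh.
by nk_lia.
Qed.

Lemma shift_eq_witness m n x : ~ shift_eq m n x ->
  exists mu, Zcyl mu x /\
    forall T y, occurs_at T mu y -> ~ shift_eq (addk T m) (addk T n) y.
Proof.
move=> /existsNP [p /existsNP [q /not_implyP [pq ne]]].
set D := addk (addk m n) q.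
have [mu e] := pv_defined x (a := zerok k) (b := D) ltac:(nk_lia).
have dmu : kdeg mu = D by rewrite (pv_deg e); nk_lia.
exists mu; split => [|T y occ sh]; first by rewrite /Zcyl /= dmu.
have seg a b : lek a b -> lek b D -> pv x a b = pv y (addk T a) (addk T b).
  move=> ab bD; have := pv_subsegment (s := zerok k) (t := T) ab bD.
  by rewrite !add0k; apply; rewrite e -dmu.
apply: ne; rewrite !seg; try by nk_lia.
by have := sh p q pq; rewrite -!addkA.
Qed.

End InfinitePaths.

Lemma le0_geometric_bound (R : realType) (a r : R) :
  0 <= r -> r < 1 -> (forall J, a <= r ^+ J) -> a <= 0.
Proof.
move=> r0 r1 ar; have r_cvg := @cvg_expr R r ltac:(by rewrite ger0_norm).
have := @limr_ge _ _ _ R a (fun J => r ^+ J) (cvgP _ r_cvg).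
by rewrite (cvg_lim _ r_cvg) //; apply; apply: nearW.
Qed.

Lemma probability_geometric_decay (d : measure_display) (T : measurableType d)
    (R : realType) (P : probability T R) (E : nat -> set T) (S : set T) (r : R) :
  0 <= r -> r < 1 -> (forall J, measurable (E J)) ->
  (forall J, (P (E J.+1) <= r%:E * P (E J))%E) ->
  measurable S -> (forall J, S `<=` E J) -> P S = 0%E.
Proof.
move=> r0 r1 mE decay mS SE.
have PE J : (P (E J) <= (r ^+ J)%:E)%E.
  elim: J => [|J IH]; first exact: probability_le1.
  apply: le_trans (decay J) _; rewrite exprS EFinM.
  by apply: lee_wpmul2l; rewrite ?lee_fin.
have PS J : (P S <= (r ^+ J)%:E)%E.
  by apply: le_trans (PE J); apply: le_measure; rewrite ?inE.
have PS_fin : P S \is a fin_num.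
  by rewrite ge0_fin_numE ?measure_ge0 // (le_lt_trans (PS 0%N)) ?ltry.
rewrite -(fineK PS_fin); congr EFin; apply/eqP; rewrite eq_le fine_ge0 ?andbT //.
by apply: le0_geometric_bound r0 r1 _ => J; rewrite -lee_fin fineK.
Qed.

Lemma exists_pos_lower_bound (T : finType) (R : realFieldType) (f : T -> R) :
  (forall t, 0 < f t) -> exists d, [/\ 0 < d, d <= 1 & forall t, d <= f t].
Proof.
move=> f_gt0; exists (\big[Num.min/1]_t f t); split.
- by elim/big_rec: _ => // t x _ x_gt0; rewrite lt_min f_gt0.
- by elim/big_rec: _ => // t x _ x_le1; rewrite ge_min x_le1 orbT.
- by move=> t; rewrite (bigD1 t) //= ge_min lexx.
Qed.

Section Measurability.
Variables (k : nat) (G : kgraph k) (x0 : Linf G).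

Lemma cyl_open_measurable (U : set (Linf G)) :
  cyl_open U -> measurable (U : set (LinfBorel x0)).
Proof. exact: sub_sigma_algebra. Qed.

Lemma measurable_Zcyl (l : kmor G) : measurable (Zcyl l : set (LinfBorel x0)).
Proof. exact: cyl_open_measurable (prefix_determined_open (@Zcyl_prefix_determined _ G l)). Qed.

Lemma measurable_shift_eq (m n : Nk k) :
  measurable ([set x | shift_eq m n x] : set (LinfBorel x0)).
Proof.
have open_compl : cyl_open (~` [set x : Linf G | shift_eq m n x]).
  move=> y /= /shift_eq_witness [mu [Zy fails]].
  exists [:: mu]; split => [l|y' /(_ mu (mem_head _ _))].
    by rewrite inE => /eqP ->.
  by rewrite Zcyl_occursE => /fails; rewrite !add0k.
by rewrite -[X in measurable X]setCK; exact: measurableC (cyl_open_measurable open_compl).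
Qed.

End Measurability.

Definition rho_invpow k (R : unitRingType) (rho : 'I_k -> R) (D : Nk k) : R :=
  \prod_(i < k) rho i ^- D i.

Lemma rho_invpow_gt0 k (R : numFieldType) (rho : 'I_k -> R) D :
  (forall i, 0 < rho i) -> 0 < rho_invpow rho D.
Proof. by move=> rho_gt0; apply: prodr_gt0 => i _; rewrite invr_gt0 exprn_gt0. Qed.

Lemma rho_invpowD k (R : fieldType) (rho : 'I_k -> R) D D' :
  rho_invpow rho (addk D D') = rho_invpow rho D * rho_invpow rho D'.
Proof. by rewrite -big_split; apply: eq_bigr => i _; rewrite ffunE exprD invfM. Qed.

Section CylinderMeasure.
Variables (k : nat) (G : kgraph k) (R : realType).
Variables (rho : 'I_k -> R) (xL : kvert G -> R).
Variables (x0 : Linf G) (M : probability (LinfBorel x0) R).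
Implicit Types (l mu : kmor G) (D : Nk k).
Hypothesis M_Zcyl : forall l, M (Zcyl l) = (rho_invpow rho (kdeg l) * xL (ks l))%:E.
Hypotheses (rho_gt0 : forall i, 0 < rho i) (xL_gt0 : forall v, 0 < xL v).

Lemma Zcyl_nonempty l : exists y, Zcyl l y.
Proof.
apply: contrapT => noy.
have : M (Zcyl l) = 0%E.
  rewrite (_ : Zcyl l = set0) ?measure0 //.
  by apply/seteqP; split => // y Zy; apply: noy; exists y.
by rewrite M_Zcyl => -[] /eqP; rewrite gt_eqF // mulr_gt0 ?rho_invpow_gt0.
Qed.

Hypothesis Hfin : kfinite G.

Lemma measure_Zcyl_partition D (A : set (LinfBorel x0)) : measurable A ->
  M A = (\sum_(l \in [set l : kmor G | kdeg l = D]) M (A `&` Zcyl l))%E.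
Proof.
move=> mA.
have eA : A = \bigcup_(l in [set l : kmor G | kdeg l = D]) (A `&` Zcyl l).
  apply/seteqP; split=> [y Ay|y [l _ []] //].
  have [l e] := pv_defined y (a := zerok k) (b := D) ltac:(nk_lia).
  have dl : kdeg l = D by rewrite (pv_deg e); nk_lia.
  by exists l => //; split => //; rewrite /Zcyl /= dl.
rewrite {1}eA measure_fin_bigcup //.
- move=> l l' /= dl dl' [y [[_ Zy] [_ Zy']]].
  by move: Zy Zy'; rewrite /Zcyl /= dl dl' => -> [].
- by move=> l _; apply: measurableI => //; apply: measurable_Zcyl.
Qed.

Lemma measure_Zcyl_setD_comp l mu r : ks l = kr mu ->
  1 - rho_invpow rho (kdeg mu) * xL (ks mu) / xL (ks l) <= r ->
  (M (Zcyl l `\` Zcyl (kcomp l mu)) <= r%:E * M (Zcyl l))%E.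
Proof.
move=> lmu ratio_r.
have sub : Zcyl (kcomp l mu) `<=` Zcyl l.
  by move=> y; rewrite !Zcyl_occursE => /occurs_at_comp-/(_ lmu) [].
have Zl_fin : (M (Zcyl l) < +oo)%E by rewrite M_Zcyl ltry.
rewrite measureD //; try exact: measurable_Zcyl.
rewrite setIidr //= !M_Zcyl kdeg_comp // rho_invpowD ks_comp // -EFinB -EFinM lee_fin.
have pos : 0 < rho_invpow rho (kdeg l) * xL (ks l) by rewrite mulr_gt0 ?rho_invpow_gt0.
have := ler_wpM2r (ltW pos) ratio_r.
have xl_neq0 : xL (ks l) != 0 by rewrite gt_eqF.
set a := rho_invpow rho (kdeg l); set b := rho_invpow rho (kdeg mu).
suff -> : (1 - b * xL (ks mu) / xL (ks l)) * (a * xL (ks l)) =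
    a * xL (ks l) - a * b * xL (ks mu) by [].
by field.
Qed.

Section Avoidance.
Variables (nu : kvert G -> kmor G) (L : Nk k).
Hypotheses (nu_r : forall v, kr (nu v) = v) (nu_L : forall v, lek (kdeg (nu v)) L).

Lemma measurable_avoids J : measurable (avoids nu L J : set (LinfBorel x0)).
Proof. exact: cyl_open_measurable (prefix_determined_open (avoids_prefix_determined (J := J) nu_L)). Qed.

Lemma measure_avoids_decay r J : 0 <= r ->
  (forall v, 1 - rho_invpow rho (kdeg (nu v)) * xL (ks (nu v)) / xL v <= r) ->
  (M (avoids nu L J.+1) <= r%:E * M (avoids nu L J))%E.
Proof.
move=> r0 ratio_r.
rewrite (measure_Zcyl_partition (mulnk J L) (measurable_avoids J.+1)).
rewrite (measure_Zcyl_partition (mulnk J L) (measurable_avoids J)).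
rewrite ge0_mule_fsumr; last by move=> l; apply: measure_ge0.
apply: lee_fsum; first exact: Hfin.
move=> l /= dl.
have avoidsS : avoids nu L J.+1 `<=` avoids nu L J.
  by move=> y avy j jJ; apply: avy; apply: ltnW.
have [disj|Zl_sub] := prefix_determined_Zcyl (avoids_prefix_determined (J := J) nu_L) dl.
  have disj' : avoids nu L J.+1 `&` Zcyl l = set0.
    by apply/seteqP; split => // y [/avoidsS avy Zy]; rewrite -disj.
  by rewrite disj disj' measure0 mule0.
have l_nu : ks l = kr (nu (ks l)) by rewrite nu_r.
rewrite (setIidr Zl_sub).
apply: le_trans (measure_Zcyl_setD_comp l_nu (ratio_r (ks l))).
apply: le_measure; rewrite ?inE.
- by apply: measurableI; [apply: measurable_avoids | apply: measurable_Zcyl].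
- by apply: measurableD; apply: measurable_Zcyl.
move=> y [avy Zy]; split => //.
rewrite Zcyl_occursE => /occurs_at_comp-/(_ l_nu) [_].
by rewrite add0k dl; apply: avy.
Qed.

Lemma measure_never_occurs (S : set (LinfBorel x0)) : measurable S ->
  (forall y, S y -> forall j v, ~ occurs_at (mulnk j L) (nu v) y) -> M S = 0%E.
Proof.
move=> mS never.
have [d [d_gt0 d_le1 d_le]] := exists_pos_lower_bound
  (f := fun v => rho_invpow rho (kdeg (nu v)) * xL (ks (nu v)) / xL v)
  (fun v => divr_gt0 (mulr_gt0 (rho_invpow_gt0 _ rho_gt0) (xL_gt0 _)) (xL_gt0 v)).
apply: (probability_geometric_decay (r := 1 - d) _ _ measurable_avoids) mS _.
- by rewrite subr_ge0.
- by rewrite ltrBlDr ltrDl.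
- move=> J; apply: measure_avoids_decay; first by rewrite subr_ge0.
  by move=> v; rewrite lerB.
- by move=> J y Sy j _; apply: never.
Qed.

End Avoidance.

Hypothesis Hsc : kstrongly_connected G.

Lemma measure_shift_eq_eq0 m n (x : Linf G) : ~ shift_eq m n x ->
  M [set y : Linf G | shift_eq m n y] = 0%E.
Proof.
case/shift_eq_witness => mu [_ fails].
have [ga ga_mu] := choice (fun v => Hsc v (kr mu)).
pose nu v := kcomp (ga v) mu.
have nu_r v : kr (nu v) = v by rewrite kr_comp; case: (ga_mu v).
have [L nu_L] := Nk_ub (fun v => kdeg (nu v)).
apply: (measure_never_occurs nu_r nu_L (measurable_shift_eq (x0 := x0) m n)) => y sh j v.
have [_ gv_mu] := ga_mu v.
by move/occurs_at_comp => /(_ gv_mu) [_ /fails]; apply; apply: shift_eq_addl.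
Qed.

End CylinderMeasure.

Lemma in_Per_shift_eq k (G : kgraph k) (Hsc : kstrongly_connected G)
    (Hgen : kno_empty_generators G) (Hext : forall l : kmor G, exists y, Zcyl l y)
    (m n : Nk k) :
  in_Per G m n -> forall y : Linf G, shift_eq m n y.
Proof.
case=> p [q [pq_mn per]] y; apply: contrapT => /shift_eq_witness [mu [_ fails]].
have [a [da a_mu]] := exists_path_deg Hsc Hgen (kr mu) p.
have [z] := Hext (kcomp a mu); rewrite Zcyl_occursE => /occurs_at_comp-/(_ a_mu) [_].
rewrite add0k da => /fails; apply.
have -> : addk p n = addk m q by apply/ffunP => i; rewrite !ffunE; have := pq_mn i; lia.
by rewrite [addk p m]addkC; apply: shift_eq_addl.
Qed.

Theorem proposition8p2 (k : nat) (G : kgraph k) (R : realType)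
  (Hfin : kfinite G) (Hsc : kstrongly_connected G)
  (Hgen : kno_empty_generators G)
  (rho : 'I_k -> R)
  (Hrho : forall i : 'I_k, is_spectral_radius (coord_mx G i) (rho i))
  (xL : kvert G -> R)
  (Hx0 : forall v, 0 <= xL v) (Hx1 : \sum_(v : kvert G) xL v = 1)
  (Hxeig : forall (i : 'I_k) (v : kvert G),
      \sum_(w : kvert G) (coord_mx G i v w)%:R * xL w = rho i * xL v)
  (x0 : Linf G) (M : probability (LinfBorel x0) R)
  (HM : forall l : kmor G,
      M (Zcyl l) = ((\prod_(i < k) (rho i) ^- (kdeg l i)) * xL (ks l))%:E)
  (m n : Nk k) :
  measurable ([set x | shift_eq m n x] : set (LinfBorel x0)) /\
  (in_Per G m n -> M [set x | shift_eq m n x] = 1%E) /\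
  (~ in_Per G m n -> M [set x | shift_eq m n x] = 0%E).
Proof.
split; first exact: measurable_shift_eq.
have xL_gt0 := eigen_gt0 Hfin Hx0 Hxeig Hsc Hx1.
have rho_gt0 := rho_gt0 Hfin Hx0 Hxeig Hsc Hx1 Hgen.
have Hext := Zcyl_nonempty HM rho_gt0 xL_gt0.
split => [per | not_per].
- rewrite (_ : [set x | _] = setT) ?probability_setT //.
  by apply/seteqP; split => // y _; apply: in_Per_shift_eq per y.
- have [x fails] : exists x : Linf G, ~ shift_eq m n x.
    by apply/existsNP => all_shift; apply: not_per; exists m, n.
  exact (measure_shift_eq_eq0 HM rho_gt0 xL_gt0 Hfin Hsc fails).
Qed.
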